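(* Let $D=((a_n),(b_n))$ be an almost periodic divisor. Then there is $C_0<\infty$ such that ${\rm card}\{n:|a_n-c|\le1\}+{\rm card}\{n:|b_n-c|\le1\}<C_0$ for all $c\in\mathbb{C}$. If moreover $D$ is almost periodic with a regular indexing, then $\sup_n|a_n-b_n|<\infty$.
   Context: A divisor $D=((a_n)_{n\in\mathbb{N}},(b_n)_{n\in\mathbb{N}})$ consists of two sequences in $\mathbb{C}$ (repetitions allowed) without finite accumulation points. $\tau$ is an $\varepsilon$-almost period of $D$ if there are bijections $\sigma,\sigma':\mathbb{N}\to\mathbb{N}$ with $|a_n+\tau-a_{\sigma(n)}|<\varepsilon$ and $|b_n+\tau-b_{\sigma'(n)}|<\varepsilon$ for all $n$. $D$ is almost periodic if for every $\varepsilon>0$ there is $L$ such that every disc of radius $L$ contains an $\varepsilon$-almost period; it is almost periodic with a regular indexing if in addition these $\varepsilon$-almost periods can be chosen so that $\sigma=\sigma'$. *)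

From Stdlib Require Import Reals Lra List.
Open Scope R_scope.

Definition Cpx := (R * R)%type.
Definition Cadd (z w : Cpx) : Cpx := (fst z + fst w, snd z + snd w).
Definition Csub (z w : Cpx) : Cpx := (fst z - fst w, snd z - snd w).
Definition Cnorm (z : Cpx) : R := sqrt (fst z * fst z + snd z * snd z).
Definition Cdist (z w : Cpx) : R := Cnorm (Csub z w).

(* A sequence without finite accumulation points: every closed disc contains
   only finitely many terms (counted with multiplicity, i.e. finitely many indices). *)
Definition no_finite_accumulation (a : nat -> Cpx) : Prop :=
  forall (c : Cpx) (r : R), exists N : nat, forall n : nat, Cdist (a n) c <= r -> (n < N)%nat.

Record divisor := mkDivisor {
  div_a : nat -> Cpx;
  div_b : nat -> Cpx;
  div_a_discrete : no_finite_accumulation div_a;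
  div_b_discrete : no_finite_accumulation div_b
}.

Definition bijective_nat (s : nat -> nat) : Prop :=
  exists t : nat -> nat, (forall n, t (s n) = n) /\ (forall n, s (t n) = n).

Definition almost_period (a b : nat -> Cpx) (eps : R) (tau : Cpx) : Prop :=
  exists s s' : nat -> nat, bijective_nat s /\ bijective_nat s' /\
    (forall n, Cdist (Cadd (a n) tau) (a (s n)) < eps) /\
    (forall n, Cdist (Cadd (b n) tau) (b (s' n)) < eps).

Definition almost_period_regular (a b : nat -> Cpx) (eps : R) (tau : Cpx) : Prop :=
  exists s : nat -> nat, bijective_nat s /\
    (forall n, Cdist (Cadd (a n) tau) (a (s n)) < eps) /\
    (forall n, Cdist (Cadd (b n) tau) (b (s n)) < eps).

Definition almost_periodic (D : divisor) : Prop :=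
  forall eps : R, 0 < eps -> exists L : R, 0 < L /\
    forall z : Cpx, exists tau : Cpx, Cdist tau z < L /\
      almost_period (div_a D) (div_b D) eps tau.

Definition almost_periodic_regular (D : divisor) : Prop :=
  forall eps : R, 0 < eps -> exists L : R, 0 < L /\
    forall z : Cpx, exists tau : Cpx, Cdist tau z < L /\
      almost_period_regular (div_a D) (div_b D) eps tau.

Definition card_nat (P : nat -> Prop) (k : nat) : Prop :=
  exists l : list nat, NoDup l /\ (forall n, In n l <-> P n) /\ length l = k.

From Stdlib Require Import Reals List Lra Lia FinFun.
From Coquelicot Require Import Complex.
Open Scope R_scope.

(* Both statements only use almost periods with eps = 1.
   (1) Fix L such that every disc of radius L contains a 1-almost period.
   Given a centre c, pick such a tau with |tau - c| < L.  The bijection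
   attached to tau moves every point of the unit disc around c onto a point
   whose translate by -tau lies within 1 of it, hence into the fixed disc of
   radius L + 2 around 0; that disc only contains the indices below some N,
   so the unit disc around c contains at most N points, uniformly in c.
   (2) With a common bijection s, the gap |a_n - b_n| changes by less than
   2 between n and s n.  Choosing tau within L of -a_n forces a_(s n) into
   a fixed disc around 0, i.e. s n < N for a fixed N, so |a_n - b_n| is
   bounded by the maximum of the finitely many gaps |a_m - b_m|, m < N, plus 2.
   The file first collects the metric facts on Cpx (via Coquelicot's complex
   modulus), then a counting lemma and a finite-maximum lemma, then the two
   halves for single sequences, and finally the theorem. *)

Lemma Cnorm_Cmod (z : Cpx) : Cnorm z = Cmod z.
Proof. destruct z as [x y]. unfold Cnorm, Cmod; simpl. f_equal; ring. Qed.

Lemma Cdist_nonneg (p q : Cpx) : 0 <= Cdist p q.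
Proof. apply sqrt_pos. Qed.

Lemma Cdist_sym (p q : Cpx) : Cdist p q = Cdist q p.
Proof.
  destruct p as [p1 p2], q as [q1 q2]. unfold Cdist, Cnorm, Csub; simpl.
  f_equal; ring.
Qed.

Lemma Cdist_triangle (p q r : Cpx) : Cdist p r <= Cdist p q + Cdist q r.
Proof.
  unfold Cdist.
  replace (Csub p r) with (Cplus (Csub p q) (Csub q r)).
  - rewrite !Cnorm_Cmod. apply Cmod_triangle.
  - destruct p, q, r. unfold Cplus, Csub; simpl. f_equal; ring.
Qed.

Lemma Cdist_translate (p q t : Cpx) : Cdist (Cadd p t) (Cadd q t) = Cdist p q.
Proof.
  destruct p, q, t. unfold Cdist, Cnorm, Csub, Cadd; simpl. f_equal; ring.
Qed.

Lemma Cadd_0_l (t : Cpx) : Cadd (0, 0) t = t.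
Proof. destruct t. unfold Cadd; simpl. f_equal; ring. Qed.

(* |p + t - q| = |t - (q - p)|: locating p + t reduces to locating t. *)
Lemma Cdist_Cadd_Csub (p t q : Cpx) : Cdist (Cadd p t) q = Cdist t (Csub q p).
Proof.
  destruct p, t, q. unfold Cdist, Cnorm, Csub, Cadd; simpl. f_equal; ring.
Qed.

Lemma card_nat_le_of_injection (P : nat -> Prop) (s t : nat -> nat) (N k : nat) :
  (forall n, s (t n) = n) -> (forall m, P m -> (t m < N)%nat) ->
  card_nat P k -> (k <= N)%nat.
Proof.
  intros Hst Hrange [l [Hnodup [Hin Hlen]]]. subst k.
  rewrite <- (length_map t l), <- (length_seq N 0).
  apply NoDup_incl_length.
  - apply Injective_map_NoDup; [|exact Hnodup].
    intros x y Hxy. now rewrite <- (Hst x), <- (Hst y), Hxy.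
  - intros y Hy. apply in_map_iff in Hy. destruct Hy as [x [<- Hx]].
    apply in_seq. apply Hin, Hrange in Hx. lia.
Qed.

Lemma finite_upper_bound (f : nat -> R) (N : nat) :
  exists M, forall k, (k < N)%nat -> f k <= M.
Proof.
  induction N as [|N [M HM]].
  - exists 0. intros k Hk. lia.
  - exists (Rmax M (f N)). intros k Hk.
    destruct (Nat.eq_dec k N) as [->|Hne].
    + apply Rmax_r.
    + eapply Rle_trans; [apply HM; lia | apply Rmax_l].
Qed.

Lemma uniform_disc_count (a : nat -> Cpx) (r eps L : R) :
  no_finite_accumulation a ->
  (forall z, exists tau s, Cdist tau z < L /\ bijective_nat s /\
     forall n, Cdist (Cadd (a n) tau) (a (s n)) < eps) ->
  exists N : nat, forall c k,
    card_nat (fun n => Cdist (a n) c <= r) k -> (k <= N)%nat.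
Proof.
  intros Hdiscrete Hperiods.
  destruct (Hdiscrete (0, 0) (eps + r + L)) as [N HN].
  exists N. intros c k Hk.
  destruct (Hperiods c) as [tau [s [Htau [[t [_ Hst]] Hshift]]]].
  refine (card_nat_le_of_injection (fun n => Cdist (a n) c <= r) s t N k Hst _ Hk).
  intros m Hm. apply HN.
  (* a (t m) + tau is eps-close to a m, which is r-close to c, which is L-close to tau *)
  rewrite <- (Cdist_translate _ _ tau), Cadd_0_l.
  pose proof (Hshift (t m)) as Hclose. rewrite Hst in Hclose.
  pose proof (Cdist_triangle (Cadd (a (t m)) tau) (a m) tau).
  pose proof (Cdist_triangle (a m) c tau).
  rewrite (Cdist_sym c tau) in *. lra.
Qed.

Lemma bounded_gap_of_common_shifts (a b : nat -> Cpx) (eps L : R) :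
  no_finite_accumulation a ->
  (forall z, exists tau s, Cdist tau z < L /\
     (forall n, Cdist (Cadd (a n) tau) (a (s n)) < eps) /\
     (forall n, Cdist (Cadd (b n) tau) (b (s n)) < eps)) ->
  exists M : R, forall n, Cdist (a n) (b n) <= M.
Proof.
  intros Hdiscrete Hperiods.
  destruct (Hdiscrete (0, 0) (L + eps)) as [N HN].
  destruct (finite_upper_bound (fun m => Cdist (a m) (b m)) N) as [M HM].
  exists (M + 2 * eps). intros n.
  destruct (Hperiods (Csub (0, 0) (a n))) as [tau [s [Htau [Ha Hb]]]].
  (* tau is close to -a n, so a (s n) is close to a n + tau, hence to 0 *)
  assert (Hsn : (s n < N)%nat).
  { apply HN.
    pose proof (Cdist_triangle (a (s n)) (Cadd (a n) tau) (0, 0)).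
    pose proof (Ha n) as Hclose. rewrite Cdist_sym in Hclose.
    rewrite Cdist_Cadd_Csub in *. lra. }
  (* the gap at n differs from the gap at s n by less than 2 eps *)
  rewrite <- (Cdist_translate _ _ tau).
  pose proof (HM (s n) Hsn).
  pose proof (Cdist_triangle (Cadd (a n) tau) (a (s n)) (Cadd (b n) tau)).
  pose proof (Cdist_triangle (a (s n)) (b (s n)) (Cadd (b n) tau)).
  pose proof (Ha n). pose proof (Hb n). rewrite (Cdist_sym (b (s n))) in *. lra.
Qed.

Theorem mainTheorem9 (D : divisor) :
  almost_periodic D ->
  (exists C0 : R,
     forall (c : Cpx) (ka kb : nat),
       card_nat (fun n => Cdist (div_a D n) c <= 1) ka ->
       card_nat (fun n => Cdist (div_b D n) c <= 1) kb ->
       INR (ka + kb) < C0)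
  /\
  (almost_periodic_regular D ->
     exists M : R, forall n : nat, Cdist (div_a D n) (div_b D n) <= M).
Proof.
  intros Hap. split.
  - destruct (Hap 1 Rlt_0_1) as [L [_ HL]].
    destruct (uniform_disc_count (div_a D) 1 1 L (div_a_discrete D)) as [Na HNa].
    { intros z. destruct (HL z) as [tau [Hz [s [s' [Hs [_ [Ha _]]]]]]]. eauto. }
    destruct (uniform_disc_count (div_b D) 1 1 L (div_b_discrete D)) as [Nb HNb].
    { intros z. destruct (HL z) as [tau [Hz [s [s' [_ [Hs' [_ Hb]]]]]]]. eauto. }
    exists (INR (Na + Nb) + 1). intros c ka kb Hka Hkb.
    pose proof (HNa c ka Hka). pose proof (HNb c kb Hkb).
    assert (INR (ka + kb) <= INR (Na + Nb)) by (apply le_INR; lia). lra.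
  - intros Hreg. destruct (Hreg 1 Rlt_0_1) as [L [_ HL]].
    apply (bounded_gap_of_common_shifts _ _ 1 L (div_a_discrete D)).
    intros z. destruct (HL z) as [tau [Hz [s [_ [Ha Hb]]]]]. eauto.
Qed.
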